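(* Let $M$ and $M'$ be frame models such that $M'$ is a mutation of $M$ that is stable on a set $X\subseteq U_{\sigma_{\mathsf f}}$ of foreground elements, and let $\nu$ be a variable assignment. Then for every frame-logic formula $\alpha$ with $[\![\mathit{Sp}(\alpha)]\!]_M(\nu)\subseteq X$ we have $M,\nu\models\alpha$ iff $M',\nu\models\alpha$; and for every frame-logic term $t$ with $[\![\mathit{Sp}(t)]\!]_M(\nu)\subseteq X$ we have $[\![t]\!]_{M,\nu}=[\![t]\!]_{M',\nu}$.
   Context: Frame logic (FL). Fix a multi-sorted signature with a finite set $S$ of sorts containing a designated foreground sort $\sigma_{\mathsf f}$ and a background sort $\sigma_{\mathsf{S(f)}}$, a set $C$ of constants, a set $F$ of function symbols (each of a type $\tau_1\times\cdots\times\tau_m\to\tau$), and two disjoint sets of relation symbols: ordinary relations $\mathcal R$ and inductively defined relations $\mathcal I$. The universe of $\sigma_{\mathsf{S(f)}}$ is the powerset of the universe $U_{\sigma_{\mathsf f}}$ of $\sigma_{\mathsf f}$; the only symbols involving $\sigma_{\mathsf{S(f)}}$ are $\in$ (of type $\sigma_{\mathsf f}\times\sigma_{\mathsf{S(f)}}$), $\cup$, $\cap$, complement and $\emptyset$, with their standard meanings. Other background sorts may be constrained by background theories. A subset $F_{\mathsf m}\subseteq F$ of function symbols is declared mutable; each $f\in F_{\mathsf m}$ has at least one argument of sort $\sigma_{\mathsf f}$. Syntax. Guards: $\gamma ::= t=t \mid R(t_1,\dots,t_m)\ (R\in\mathcal R) \mid \gamma\wedge\gamma\mid\neg\gamma\mid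 \mathit{ite}(\gamma:\gamma,\gamma)\mid \exists y:\gamma.\,\gamma$, where guards contain no terms of sort $\sigma_{\mathsf{S(f)}}$. Formulas: $\varphi ::= t=t\mid R(t_1,\dots,t_m)\ (R\in\mathcal R\cup\mathcal I)\mid \varphi\wedge\varphi\mid\neg\varphi\mid\mathit{ite}(\gamma:\varphi,\varphi)\mid\exists y:\gamma.\,\varphi$. Terms: $t::= c\mid x\mid f(t_1,\dots,t_m)\mid \mathit{ite}(\gamma:t,t)\mid \mathit{Sp}(\varphi)\mid\mathit{Sp}(t)$, the last two (''support expressions'') being of sort $\sigma_{\mathsf{S(f)}}$. Each $R\in\mathcal I$ has a definition $R(\bar x):=\rho_R(\bar x)$, where no argument of $R$ has sort $\sigma_{\mathsf{S(f)}}$ and every occurrence of a relation of $\mathcal I$ in the FL formula $\rho_R$ is under an even number of negations or inside a support expression. Models. A model $M$ gives a universe per sort, interprets constants, functions and relations of $\mathcal R\cup\mathcal I$ (respecting background theories), and maps each support expression $\mathit{Sp}(\varphi)$, $\mathit{Sp}(t)$ to a function from variable assignments to sets of foreground elements. Evaluation is standard; $\mathit{ite}(\gamma:\alpha,\beta)$ holds iff $(\gamma\wedge\alpha)\vee(\neg\gamma\wedge\beta)$; $\exists y:\gamma.\varphi$ holds iff $\exists y.(\gamma\wedge\varphi)$; support expressions are evaluated by the interpretation. Support equations (for all $\nu$, writing $[\![\cdot]\!]$ for $[\![\cdot]\!]_M$): $\mathit{Sp}(c)=\mathit{Sp}(x)=\emptyset$; $[\![\mathit{Sp}(f(t_1..t_n))]\!](\nu)=\bigcup_{i:\,t_i\text{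 of sort }\sigma_{\mathsf f}}\{[\![t_i]\!]_{M,\nu}\}\cup\bigcup_i[\![\mathit{Sp}(t_i)]\!](\nu)$ if $f\in F_{\mathsf m}$, and $\bigcup_i[\![\mathit{Sp}(t_i)]\!](\nu)$ otherwise; $\mathit{Sp}(\mathit{Sp}(\varphi))=\mathit{Sp}(\varphi)$, $\mathit{Sp}(\mathit{Sp}(t))=\mathit{Sp}(t)$; $\mathit{Sp}(t_1=t_2)=\mathit{Sp}(t_1)\cup\mathit{Sp}(t_2)$; $\mathit{Sp}(R(\bar t))=\bigcup_i\mathit{Sp}(t_i)$ for $R\in\mathcal R$; for $R\in\mathcal I$, $[\![\mathit{Sp}(R(\bar t))]\!](\nu)=[\![\mathit{Sp}(\rho_R(\bar x))]\!](\nu[\bar x\leftarrow[\![\bar t]\!]_{M,\nu}])\cup\bigcup_i[\![\mathit{Sp}(t_i)]\!](\nu)$; $\mathit{Sp}(\alpha\wedge\beta)=\mathit{Sp}(\alpha)\cup\mathit{Sp}(\beta)$; $\mathit{Sp}(\neg\varphi)=\mathit{Sp}(\varphi)$; $[\![\mathit{Sp}(\mathit{ite}(\gamma:\alpha,\beta))]\!](\nu)=[\![\mathit{Sp}(\gamma)]\!](\nu)\cup[\![\mathit{Sp}(\alpha)]\!](\nu)$ if $M,\nu\models\gamma$ and $[\![\mathit{Sp}(\gamma)]\!](\nu)\cup[\![\mathit{Sp}(\beta)]\!](\nu)$ otherwise (likewise for term-level $\mathit{ite}$); $[\![\mathit{Sp}(\exists y:\gamma.\varphi)]\!](\nu)=\bigcup_{u}[\![\mathit{Sp}(\gamma)]\!](\nu[y\leftarrow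 u])\cup\bigcup_{u:\,M,\nu[y\leftarrow u]\models\gamma}[\![\mathit{Sp}(\varphi)]\!](\nu[y\leftarrow u])$, $u$ ranging over the domain of $y$. Inductive equations: $[\![R(\bar x)]\!]=[\![\rho_R(\bar x)]\!]$ for $R\in\mathcal I$. Frame models. Two models have the same pre-model if they agree on the universes and on all constants, functions and relations of $\mathcal R$. A model $M$ is a frame model if it satisfies the support equations and the inductive equations, and (1) no model $M''$ with the same pre-model whose support-expression interpretations are pointwise contained in those of $M$, with strict containment for at least one support expression and assignment, satisfies the support equations; and (2) no model $M''$ with the same pre-model and the same support-expression interpretations, whose inductive relations are contained in those of $M$ with at least one strictly smaller, satisfies the inductive equations. Mutations. For models $M,M'$ over the same universe, $M'$ is a mutation of $M$ if they agree on all constants, all relations in $\mathcal R$ and all functions in $F\setminus F_{\mathsf m}$. The mutation is stable on $X\subseteq U_{\sigma_{\mathsf f}}$ if $[\![f]\!]_M(u_1,\dots,u_n)=[\![f]\!]_{M'}(u_1,\dots,u_n)$ for all $f\in F_{\mathsf m}$ and all argument tuples with $\{u_1,\dots,u_n\}\cap X\neq\emptyset$. *)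

From Stdlib Require Import List Fin ClassicalEpsilon PeanoNat.

(* Sorts: the foreground sort sigma_f (SF), the background sort
   sigma_{S(f)} = powerset of the foreground universe (SSF), and the other
   sorts of the signature (SB b). *)
Inductive sort (B : Type) : Type := SF | SSF | SB (b : B).
Arguments SF {B}. Arguments SSF {B}. Arguments SB {B} b.

(* Sorts available to user symbols (constants, functions, relations):
   None = sigma_f, Some b = SB b.  No user symbol involves sigma_{S(f)}. *)
Definition emb {B : Type} (o : option B) : sort B :=
  match o with None => SF | Some b => SB b end.

Record signature := {
  bsort : Type;
  bsort_eqdec : forall a b : bsort, {a = b} + {a <> b};
  bsort_finite : exists l : list bsort, forall b, In b l;
  const : Type;
  csort : const -> option bsort;
  func : Type;
  farity : func -> nat;
  farg : forall f, Fin.t (farity f) -> option bsort;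
  fres : func -> option bsort;
  fmut : func -> bool;
  fmut_fg : forall f, fmut f = true -> exists i, farg f i = None;
  rel : Type;
  rarity : rel -> nat;
  rarg : forall r, Fin.t (rarity r) -> option bsort;
  irel : Type;
  iarity : irel -> nat;
  iarg : forall r, Fin.t (iarity r) -> option bsort
}.

Section FL.
Context {S : signature}.
Local Notation B := (bsort S).
Definition srt := sort B.

Definition sort_eqdec (s1 s2 : srt) : {s1 = s2} + {s1 <> s2}.
Proof. decide equality. apply bsort_eqdec. Defined.

Inductive var := Var (n : nat) (s : srt).
Definition vsort (x : var) : srt := match x with Var _ s => s end.

Definition var_eqdec (x y : var) : {x = y} + {x <> y}.
Proof. decide equality; first [apply sort_eqdec | apply Nat.eq_dec]. Defined.

(* Intrinsically sorted terms; guards are formulas satisfying [guard]. *)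
Inductive term : srt -> Type :=
| TConst (c : const S) : term (emb (csort S c))
| TVar (x : var) : term (vsort x)
| TApp (f : func S) (args : forall i : Fin.t (farity S f), term (emb (farg S f i)))
    : term (emb (fres S f))
| TIte (s : srt) (g : formula) (t1 t2 : term s) : term s
| TSpF (phi : formula) : term SSF
| TSpT (s : srt) (t : term s) : term SSF
| TUnion (a b : term SSF) : term SSF
| TInter (a b : term SSF) : term SSF
| TCompl (a : term SSF) : term SSF
| TEmpty : term SSF
with formula : Type :=
| FEq (s : srt) (t1 t2 : term s)
| FRel (r : rel S) (args : forall i : Fin.t (rarity S r), term (emb (rarg S r i)))
| FIRel (r : irel S) (args : forall i : Fin.t (iarity S r), term (emb (iarg S r i)))
| FMem (a : term SF) (b : term SSF)
| FAnd (a b : formula)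
| FNot (a : formula)
| FIte (g a b : formula)
| FEx (y : var) (g a : formula).

Inductive sexpr := SEF (phi : formula) | SET (s : srt) (t : term s).

Fixpoint gterm {s} (t : term s) : Prop :=
  match t with
  | TConst _ => True
  | TVar x => vsort x <> SSF
  | TApp _ args => forall i, gterm (args i)
  | TIte _ g a b => guard g /\ gterm a /\ gterm b
  | _ => False
  end
with guard (phi : formula) : Prop :=
  match phi with
  | FEq _ a b => gterm a /\ gterm b
  | FRel _ args => forall i, gterm (args i)
  | FIRel _ _ => False
  | FMem _ _ => False
  | FAnd a b => guard a /\ guard b
  | FNot a => guard a
  | FIte g a b => guard g /\ guard a /\ guard b
  | FEx _ g a => guard g /\ guard a
  end.

Fixpoint wft {s} (t : term s) : Prop :=
  match t with
  | TConst _ => True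
  | TVar _ => True
  | TApp _ args => forall i, wft (args i)
  | TIte _ g a b => guard g /\ wft a /\ wft b
  | TSpF phi => wff phi
  | TSpT _ t => wft t
  | TUnion a b => wft a /\ wft b
  | TInter a b => wft a /\ wft b
  | TCompl a => wft a
  | TEmpty => True
  end
with wff (phi : formula) : Prop :=
  match phi with
  | FEq _ a b => wft a /\ wft b
  | FRel _ args => forall i, wft (args i)
  | FIRel _ args => forall i, wft (args i)
  | FMem a b => wft a /\ wft b
  | FAnd a b => wff a /\ wff b
  | FNot a => wff a
  | FIte g a b => guard g /\ wff a /\ wff b
  | FEx _ g a => guard g /\ wff a
  end.

Definition wfe (e : sexpr) : Prop :=
  match e with SEF phi => wff phi | SET _ t => wft t end.

Fixpoint freet (x : var) {s} (t : term s) : Prop :=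
  match t with
  | TConst _ => False
  | TVar y => x = y
  | TApp _ args => exists i, freet x (args i)
  | TIte _ g a b => freef x g \/ freet x a \/ freet x b
  | TSpF phi => freef x phi
  | TSpT _ t => freet x t
  | TUnion a b => freet x a \/ freet x b
  | TInter a b => freet x a \/ freet x b
  | TCompl a => freet x a
  | TEmpty => False
  end
with freef (x : var) (phi : formula) : Prop :=
  match phi with
  | FEq _ a b => freet x a \/ freet x b
  | FRel _ args => exists i, freet x (args i)
  | FIRel _ args => exists i, freet x (args i)
  | FMem a b => freet x a \/ freet x b
  | FAnd a b => freef x a \/ freef x b
  | FNot a => freef x a
  | FIte g a b => freef x g \/ freef x a \/ freef x b
  | FEx y g a => x <> y /\ (freef x g \/ freef x a)
  end.

(* Positivity: with polarity p (true = under an even number of negations),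
   every occurrence of an inductive relation outside support expressions
   is positive.  Occurrences inside terms are necessarily inside support
   expressions (guards contain no inductive relations), so terms impose no
   constraint. *)
Fixpoint ipos (p : bool) (phi : formula) : Prop :=
  match phi with
  | FIRel _ _ => p = true
  | FAnd a b => ipos p a /\ ipos p b
  | FNot a => ipos (negb p) a
  | FIte _ a b => ipos p a /\ ipos p b
  | FEx _ _ a => ipos p a
  | _ => True
  end.

(* Definitions R(x_1..x_m) := rho_R: parameter x_i is the variable
   Var (iparam r i) (sort of the i-th argument of r). *)
Record idefs := {
  iparam : forall r : irel S, Fin.t (iarity S r) -> nat;
  irho : irel S -> formula
}.
Definition pvar (D : idefs) (r : irel S) (i : Fin.t (iarity S r)) : var :=
  Var (iparam D r i) (emb (iarg S r i)).

Definition idefs_wf (D : idefs) : Prop :=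
  forall r : irel S,
    (forall i j, pvar D r i = pvar D r j -> i = j) /\
    wff (irho D r) /\
    ipos true (irho D r) /\
    (forall x, freef x (irho D r) -> exists i, x = pvar D r i).

Definition U (UF : Type) (UB : B -> Type) (s : srt) : Type :=
  match s with SF => UF | SSF => UF -> Prop | SB b => UB b end.

Record premodel (UF : Type) (UB : B -> Type) := {
  cI : forall c : const S, U UF UB (emb (csort S c));
  fI : forall f : func S,
        (forall i, U UF UB (emb (farg S f i))) -> U UF UB (emb (fres S f));
  rI : forall r : rel S, (forall i, U UF UB (emb (rarg S r i))) -> Prop
}.

Definition assignment (UF : Type) (UB : B -> Type) : Type :=
  forall x : var, U UF UB (vsort x).

Record model (UF : Type) (UB : B -> Type) := {
  pre : premodel UF UB;
  iI : forall r : irel S, (forall i, U UF UB (emb (iarg S r i))) -> Prop;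
  spI : sexpr -> assignment UF UB -> UF -> Prop
}.

Section Eval.
Context {UF : Type} {UB : B -> Type}.
Local Notation U := (U UF UB).
Local Notation assignment := (assignment UF UB).

Definition upd (nu : assignment) (y : var) (u : U (vsort y)) : assignment :=
  fun x => match var_eqdec y x with
           | left e => eq_rect y (fun z => U (vsort z)) u x e
           | right _ => nu x
           end.

Variable M : model UF UB.

Fixpoint eval (nu : assignment) {s} (t : term s) {struct t} : U s :=
  match t in term s return U s with
  | TConst c => cI _ _ (pre _ _ M) c
  | TVar x => nu x
  | TApp f args => fI _ _ (pre _ _ M) f (fun i => eval nu (args i))
  | TIte _ g t1 t2 =>
      if excluded_middle_informative (sat nu g) then eval nu t1 else eval nu t2
  | TSpF phi => spI _ _ M (SEF phi) nu
  | TSpT s t => spI _ _ M (SET s t) nu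
  | TUnion a b => fun u => eval nu a u \/ eval nu b u
  | TInter a b => fun u => eval nu a u /\ eval nu b u
  | TCompl a => fun u => ~ eval nu a u
  | TEmpty => fun _ => False
  end
with sat (nu : assignment) (phi : formula) {struct phi} : Prop :=
  match phi with
  | FEq _ a b => eval nu a = eval nu b
  | FRel r args => rI _ _ (pre _ _ M) r (fun i => eval nu (args i))
  | FIRel r args => iI _ _ M r (fun i => eval nu (args i))
  | FMem a b => eval nu b (eval nu a)
  | FAnd a b => sat nu a /\ sat nu b
  | FNot a => ~ sat nu a
  | FIte g a b => (sat nu g /\ sat nu a) \/ (~ sat nu g /\ sat nu b)
  | FEx y g a => exists u : U (vsort y), sat (upd nu y u) g /\ sat (upd nu y u) a
  end.

Definition spF (phi : formula) (nu : assignment) : UF -> Prop := spI _ _ M (SEF phi) nu.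
Definition spT {s} (t : term s) (nu : assignment) : UF -> Prop := spI _ _ M (SET s t) nu.

Definition fg_eq (o : option B) : U (emb o) -> UF -> Prop :=
  match o as o return U (emb o) -> UF -> Prop with
  | None => fun v u => v = u
  | Some _ => fun _ _ => False
  end.

Variable D : idefs.

Definition param_upd (r : irel S) (nu : assignment)
    (vals : forall i, U (emb (iarg S r i))) : assignment :=
  fun x =>
    match excluded_middle_informative (exists i, pvar D r i = x) with
    | left h =>
        let w := constructive_indefinite_description _ h in
        eq_rect (pvar D r (proj1_sig w)) (fun z => U (vsort z))
                (vals (proj1_sig w)) x (proj2_sig w)
    | right _ => nu x
    end.

Definition sp_rhs (e : sexpr) (nu : assignment) : UF -> Prop :=
  match e with
  | SET _ t =>
      match t with
      | TConst _ => fun _ => False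
      | TVar _ => fun _ => False
      | TApp f args => fun u =>
          (fmut S f = true /\ exists i, fg_eq (farg S f i) (eval nu (args i)) u)
          \/ exists i, spT (args i) nu u
      | TIte _ g a b => fun u =>
          spF g nu u \/ (sat nu g /\ spT a nu u) \/ (~ sat nu g /\ spT b nu u)
      | TSpF phi => spF phi nu
      | TSpT _ t => spT t nu
      | TUnion a b => fun u => spT a nu u \/ spT b nu u
      | TInter a b => fun u => spT a nu u \/ spT b nu u
      | TCompl a => spT a nu
      | TEmpty => fun _ => False
      end
  | SEF phi =>
      match phi with
      | FEq _ a b => fun u => spT a nu u \/ spT b nu u
      | FRel _ args => fun u => exists i, spT (args i) nu u
      | FIRel r args => fun u =>
          spF (irho D r) (param_upd r nu (fun i => eval nu (args i))) u
          \/ exists i, spT (args i) nu u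
      | FMem a b => fun u => spT a nu u \/ spT b nu u
      | FAnd a b => fun u => spF a nu u \/ spF b nu u
      | FNot a => spF a nu
      | FIte g a b => fun u =>
          spF g nu u \/ (sat nu g /\ spF a nu u) \/ (~ sat nu g /\ spF b nu u)
      | FEx y g a => fun u =>
          (exists v, spF g (upd nu y v) u)
          \/ (exists v, sat (upd nu y v) g /\ spF a (upd nu y v) u)
      end
  end.

Definition support_eqs : Prop :=
  forall (e : sexpr) (nu : assignment), wfe e ->
    forall u, spI _ _ M e nu u <-> sp_rhs e nu u.

Definition ind_eqs : Prop :=
  forall (r : irel S) (nu : assignment),
    iI _ _ M r (fun i => nu (pvar D r i)) <-> sat nu (irho D r).

End Eval.

Section Frame.
Context {UF : Type} {UB : B -> Type}.

(* Th: the background theories, as a constraint on pre-models *)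
Definition frame_model (D : idefs)
    (Th : forall (UF : Type) (UB : B -> Type), premodel UF UB -> Prop)
    (M : model UF UB) : Prop :=
  Th UF UB (pre _ _ M) /\
  support_eqs M D /\ ind_eqs M D /\
  (forall M'' : model UF UB,
     pre _ _ M'' = pre _ _ M ->
     (forall e nu u, wfe e -> spI _ _ M'' e nu u -> spI _ _ M e nu u) ->
     (exists e nu u, wfe e /\ spI _ _ M e nu u /\ ~ spI _ _ M'' e nu u) ->
     ~ support_eqs M'' D) /\
  (forall M'' : model UF UB,
     pre _ _ M'' = pre _ _ M ->
     spI _ _ M'' = spI _ _ M ->
     (forall r vals, iI _ _ M'' r vals -> iI _ _ M r vals) ->
     (exists r vals, iI _ _ M r vals /\ ~ iI _ _ M'' r vals) ->
     ~ ind_eqs M'' D).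

Definition mutation (M M' : model UF UB) : Prop :=
  (forall c, cI _ _ (pre _ _ M) c = cI _ _ (pre _ _ M') c) /\
  (forall r, rI _ _ (pre _ _ M) r = rI _ _ (pre _ _ M') r) /\
  (forall f, fmut S f = false -> fI _ _ (pre _ _ M) f = fI _ _ (pre _ _ M') f).

Definition fg_in (X : UF -> Prop) (o : option B) : U UF UB (emb o) -> Prop :=
  match o as o return U UF UB (emb o) -> Prop with
  | None => fun v => X v
  | Some _ => fun _ => False
  end.

Definition stable_on (M M' : model UF UB) (X : UF -> Prop) : Prop :=
  forall f, fmut S f = true ->
    forall args : forall i, U UF UB (emb (farg S f i)),
      (exists i, fg_in X (farg S f i) (args i)) ->
      fI _ _ (pre _ _ M) f args = fI _ _ (pre _ _ M') f args.

End Frame.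
End FL.

From Stdlib Require Import FunctionalExtensionality PropExtensionality Classical.
From Stdlib Require Import ClassicalEpsilon Eqdep_dec.

(* In a frame model the support interpretation and the inductive relations are the least
   solutions of their equations: the minimality conditions exclude smaller solutions, and
   a least one exists by Knaster-Tarski (for inductive relations, monotonicity is the
   positivity condition).  Hence a frame model's interpretation lies inside every
   prefixpoint of its equations, and supports depend only on free variables.

   Guards are compared by induction along the support: a mutable function is applied to
   a tuple whose foreground argument lies in the support, hence in X, where M and M' agree.
   The X-bounded part of the support of M is then a prefixpoint of the support equations of
   M', so supports bounded by X agree.  In the same way the inductive relations of M at
   X-bounded definition instances form a prefixpoint of the inductive equations of M', and
   the remaining cases of the induction are structural. *)

Scheme term_mind := Induction for term Sort Prop
  with formula_mind := Induction for formula Sort Prop.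
Combined Scheme term_formula_mind from term_mind, formula_mind.

(** * Least fixpoints of monotone operators on predicates *)

Section LeastFixpoint.
Variables (T : Type) (F : (T -> Prop) -> T -> Prop).
Hypothesis F_mono : forall P Q : T -> Prop, (forall x, P x -> Q x) -> forall x, F P x -> F Q x.

Definition prefixpoint (P : T -> Prop) : Prop := forall x, F P x -> P x.
Definition lfp (x : T) : Prop := forall P, prefixpoint P -> P x.

Lemma lfp_prefixpoint : prefixpoint lfp.
Proof.
  intros x Hx P HP. apply HP. revert Hx. apply F_mono. intros y Hy. exact (Hy P HP).
Qed.

Lemma lfp_unfold x : lfp x -> F lfp x.
Proof.
  intros Hx. apply Hx. intros y Hy. revert Hy. apply F_mono. apply lfp_prefixpoint.
Qed.
End LeastFixpoint.

(** * Syntax and evaluation *)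

Section FrameLogic.
Context {S : signature} {UF : Type} {UB : bsort S -> Type}.

Lemma emb_neq_SSF (o : option (bsort S)) : emb o <> SSF.
Proof. destruct o; discriminate. Qed.

Lemma guard_wf :
  (forall s (t : @term S s), gterm t -> wft t) /\ (forall phi : @formula S, guard phi -> wff phi).
Proof. apply term_formula_mind; simpl; firstorder. Qed.

Lemma gterm_wft s (t : @term S s) : gterm t -> wft t.
Proof. apply guard_wf. Qed.

Lemma guard_wff (phi : @formula S) : guard phi -> wff phi.
Proof. apply guard_wf. Qed.

Lemma wft_gterm s (t : @term S s) : s <> SSF -> wft t -> gterm t.
Proof.
  induction t using term_mind with (P0 := fun _ => True); simpl; try tauto.
  intros _ Hargs i. apply H; auto using emb_neq_SSF.
Qed.

Lemma wft_gterm_emb o (t : @term S (emb o)) : wft t -> gterm t.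
Proof. apply wft_gterm, emb_neq_SSF. Qed.

Definition irel_interp : Type :=
  forall r : irel S, (forall i, U UF UB (emb (iarg S r i))) -> Prop.

Definition with_sp (M : model UF UB) P : model UF UB :=
  {| pre := pre _ _ M; iI := iI _ _ M; spI := P |}.
Definition with_iI (M : model UF UB) (I : irel_interp) : model UF UB :=
  {| pre := pre _ _ M; iI := I; spI := spI _ _ M |}.

Lemma with_iI_id (M : model UF UB) : with_iI M (iI _ _ M) = M.
Proof. destruct M; reflexivity. Qed.

Lemma ite_eval_eq {A : Type} (P Q : Prop) (a b c d : A) :
  (P <-> Q) -> (P -> a = c) -> (~ P -> b = d) ->
  (if excluded_middle_informative P then a else b) =
  (if excluded_middle_informative Q then c else d).
Proof.
  intros E Hac Hbd.
  destruct (excluded_middle_informative P), (excluded_middle_informative Q); tauto.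
Qed.

Lemma guard_pre_indep (M1 M2 : model UF UB) : pre _ _ M1 = pre _ _ M2 ->
  (forall s (t : @term S s), gterm t -> forall nu, eval M1 nu t = eval M2 nu t) /\
  (forall phi : @formula S, guard phi -> forall nu, sat M1 nu phi <-> sat M2 nu phi).
Proof.
  intros Hp. apply term_formula_mind; simpl; intros; try tauto.
  - rewrite Hp; reflexivity.
  - rewrite Hp. f_equal. apply functional_extensionality_dep; auto.
  - destruct H2 as (Hg & Ha & Hb). apply ite_eval_eq; auto.
  - destruct H1. rewrite H, H0 by assumption. reflexivity.
  - replace (fun i => eval M1 nu (args i)) with (fun i => eval M2 nu (args i))
      by (apply functional_extensionality_dep; symmetry; auto).
    rewrite Hp. reflexivity.
  - destruct H1. rewrite H, H0 by assumption. reflexivity.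
  - rewrite H by assumption. reflexivity.
  - destruct H2 as (? & ? & ?). rewrite H, H0, H1 by assumption. reflexivity.
  - destruct H1. setoid_rewrite H; [setoid_rewrite H0|]; tauto.
Qed.

Lemma sat_guard_pre_indep (M1 M2 : model UF UB) (phi : @formula S) nu :
  pre _ _ M1 = pre _ _ M2 -> guard phi -> (sat M1 nu phi <-> sat M2 nu phi).
Proof. intros Hp Hg. exact (proj2 (guard_pre_indep M1 M2 Hp) phi Hg nu). Qed.

Lemma eval_gterm_pre_indep (M1 M2 : model UF UB) s (t : @term S s) nu :
  pre _ _ M1 = pre _ _ M2 -> gterm t -> eval M1 nu t = eval M2 nu t.
Proof. intros Hp Hg. exact (proj1 (guard_pre_indep M1 M2 Hp) s t Hg nu). Qed.

Lemma eval_iI_indep (M1 M2 : model UF UB) s (t : @term S s) nu :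
  pre _ _ M1 = pre _ _ M2 -> spI _ _ M1 = spI _ _ M2 -> wft t -> eval M1 nu t = eval M2 nu t.
Proof.
  intros Hp Hs. revert nu.
  induction t using term_mind with (P0 := fun _ => True); simpl; intros; try tauto.
  - rewrite Hp; reflexivity.
  - rewrite Hp. f_equal. apply functional_extensionality_dep; auto.
  - destruct H as (Hg & Ha & Hb).
    apply ite_eval_eq; auto using sat_guard_pre_indep.
  - rewrite Hs; reflexivity.
  - rewrite Hs; reflexivity.
  - destruct H. rewrite IHt1, IHt2 by assumption. reflexivity.
  - destruct H. rewrite IHt1, IHt2 by assumption. reflexivity.
  - rewrite IHt by assumption. reflexivity.
Qed.

Definition agree (V : var -> Prop) (nu nu' : assignment UF UB) : Prop :=
  forall x, V x -> nu x = nu' x.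

Definition frees (x : var) (e : @sexpr S) : Prop :=
  match e with SEF phi => freef x phi | SET _ t => freet x t end.

Definition sp_local (M : model UF UB) : Prop :=
  forall e nu nu' u, wfe e -> agree (fun x => frees x e) nu nu' ->
    spI _ _ M e nu u -> spI _ _ M e nu' u.

Lemma agree_sym V (nu nu' : assignment UF UB) : agree V nu nu' -> agree V nu' nu.
Proof. intros H x Hx. symmetry; auto. Qed.

Lemma agree_upd V (nu nu' : assignment UF UB) y v :
  agree (fun x => V x /\ x <> y) nu nu' -> agree V (upd nu y v) (upd nu' y v).
Proof.
  intros H x Hx. unfold upd. destruct (var_eqdec y x); [reflexivity|].
  apply H; auto.
Qed.

Lemma eval_sat_agree (M : model UF UB) : sp_local M ->
  (forall s (t : @term S s), wft t -> forall nu nu',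
     agree (fun x => freet x t) nu nu' -> eval M nu t = eval M nu' t) /\
  (forall phi : @formula S, wff phi -> forall nu nu',
     agree (fun x => freef x phi) nu nu' -> (sat M nu phi <-> sat M nu' phi)).
Proof.
  intros Hloc. apply term_formula_mind; simpl; intros; unfold agree in *; simpl in *;
    try solve [ reflexivity
              | destruct H1; rewrite (H H1 nu nu'), (H0 H3 nu nu') by auto; reflexivity
              | rewrite (H H0 nu nu') by auto; reflexivity ].
  - apply H0; reflexivity.
  - f_equal. apply functional_extensionality_dep. intros i.
    apply H; auto. intros x Hx; apply H1; eauto.
  - destruct H2 as (Hg & Ha & Hb).
    apply ite_eval_eq; [apply H; auto using guard_wff | intros; apply H0 | intros; apply H1];
      auto.
  - apply functional_extensionality; intros u. apply propositional_extensionality.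
    split; apply Hloc; auto. apply agree_sym. exact H1.
  - apply functional_extensionality; intros u. apply propositional_extensionality.
    split; apply Hloc; auto. apply agree_sym. exact H1.
  - replace (fun i => eval M nu (args i)) with (fun i => eval M nu' (args i)); [reflexivity|].
    apply functional_extensionality_dep. intros i. symmetry.
    apply H; auto. intros x Hx; apply H1; eauto.
  - replace (fun i => eval M nu (args i)) with (fun i => eval M nu' (args i)); [reflexivity|].
    apply functional_extensionality_dep. intros i. symmetry.
    apply H; auto. intros x Hx; apply H1; eauto.
  - destruct H2 as (Hg & Ha & Hb).
    rewrite (H (guard_wff _ Hg) nu nu'), (H0 Ha nu nu'), (H1 Hb nu nu') by auto. reflexivity.
  - destruct H1 as [Hg Ha].
    split; intros [v Hv]; exists v;
      rewrite (H (guard_wff _ Hg) (upd nu y v) (upd nu' y v)),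
              (H0 Ha (upd nu y v) (upd nu' y v)) in *;
      try tauto; apply agree_upd; intros x [Hx Hxy]; auto.
Qed.

Lemma sat_guard_indep (M1 M2 : model UF UB) (phi : @formula S) nu nu' :
  pre _ _ M1 = pre _ _ M2 -> guard phi -> agree (fun x => freef x phi) nu nu' ->
  (sat M1 nu phi <-> sat M2 nu' phi).
Proof.
  (* Guards never read supports, so evaluate them where supports are empty, hence local. *)
  intros Hp Hg Hag. set (M0 := with_sp M1 (fun _ _ _ => False)).
  rewrite (sat_guard_pre_indep M1 M0), (sat_guard_pre_indep M2 M0) by auto.
  apply (eval_sat_agree M0); auto using guard_wff. intros e n n' u _ _ [].
Qed.

Lemma eval_gterm_indep (M1 M2 : model UF UB) s (t : @term S s) nu nu' :
  pre _ _ M1 = pre _ _ M2 -> gterm t -> agree (fun x => freet x t) nu nu' ->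
  eval M1 nu t = eval M2 nu' t.
Proof.
  intros Hp Hg Hag. set (M0 := with_sp M1 (fun _ _ _ => False)).
  rewrite (eval_gterm_pre_indep M1 M0), (eval_gterm_pre_indep M2 M0) by auto.
  apply (eval_sat_agree M0); auto using gterm_wft. intros e n n' u _ _ [].
Qed.

Definition sp_within (M : model UF UB) e nu (X : UF -> Prop) : Prop :=
  forall w, spI _ _ M e nu w -> X w.

Variable D : @idefs S.
Hypothesis HD : idefs_wf D.

Lemma sp_within_rhs (M : model UF UB) e nu X :
  support_eqs M D -> wfe e -> sp_within M e nu X -> forall w, sp_rhs M D e nu w -> X w.
Proof. intros Hse Hw HX w Hr. apply HX, Hse; auto. Qed.

Lemma param_upd_pvar r (nu : assignment UF UB) vals i :
  param_upd D r nu vals (pvar D r i) = vals i.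
Proof.
  unfold param_upd.
  destruct (excluded_middle_informative (exists j, pvar D r j = pvar D r i)) as [h|h].
  - destruct (constructive_indefinite_description _ h) as [j ej]; simpl.
    assert (j = i) by (apply (proj1 (HD r)); auto). subst j.
    rewrite (UIP_dec var_eqdec ej eq_refl). reflexivity.
  - exfalso; apply h; exists i; reflexivity.
Qed.

Lemma agree_irho r (nu nu' : assignment UF UB) :
  (forall i, nu (pvar D r i) = nu' (pvar D r i)) ->
  agree (fun x => freef x (irho D r)) nu nu'.
Proof.
  intros H x Hx. destruct (proj2 (proj2 (proj2 (HD r))) x Hx) as [i ->]. apply H.
Qed.

Lemma sp_rhs_transfer (M1 M2 : model UF UB) (X : UF -> Prop) e nu u :
  wfe e ->
  (forall g nu', guard g -> sp_within M1 (SEF g) nu' X -> (sat M1 nu' g <-> sat M2 nu' g)) ->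
  (forall s (t : @term S s) nu', gterm t -> sp_within M1 (SET s t) nu' X ->
     eval M1 nu' t = eval M2 nu' t) ->
  (forall e' nu', wfe e' -> sp_within M1 e' nu' X -> spI _ _ M2 e' nu' u -> spI _ _ M1 e' nu' u) ->
  (forall w, sp_rhs M1 D e nu w -> X w) ->
  sp_rhs M2 D e nu u -> sp_rhs M1 D e nu u.
Proof.
  intros Hwf HG HT HP HX.
  pose proof wft_gterm_emb as Hargs.
  destruct e as [phi | s t]; [destruct phi | destruct t]; simpl in *; unfold spT, spF in *;
    unfold sp_within in *;
    try solve [ tauto
              | intros K; apply HP; simpl; auto
              | destruct Hwf; intros [K|K]; [left|right]; apply HP; simpl; auto
              | intros [i K]; exists i; apply HP; simpl; eauto ].
  - replace (fun i => eval M2 nu (args i)) with (fun i => eval M1 nu (args i))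
      by (apply functional_extensionality_dep; intros i; apply HT; eauto).
    intros [K|[i K]]; [left|right; exists i]; apply HP; simpl; eauto. apply HD.
  - destruct Hwf as (Hg & Ha & Hb).
    assert (E := HG _ _ Hg (fun w h => HX w (or_introl h))).
    intros [K|[[Kg K]|[Kg K]]]; [left | right; left | right; right];
      try split; try tauto; apply HP; simpl; auto using guard_wff; intros; apply HX; tauto.
  - destruct Hwf as [Hg Ha].
    intros [[v K]|[v [Kg K]]].
    + left; exists v. apply HP; simpl; eauto using guard_wff.
    + assert (E := HG _ _ Hg (fun w h => HX w (or_introl (ex_intro _ v h)))).
      right; exists v. split; [tauto|]. apply HP; simpl; auto.
      intros; apply HX; right; exists v; tauto.
  - intros [[Hm [i K]]|[i K]].
    + left; split; auto; exists i. rewrite HT; eauto.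
    + right; exists i; apply HP; simpl; eauto.
  - destruct Hwf as (Hg & Ha & Hb).
    assert (E := HG _ _ Hg (fun w h => HX w (or_introl h))).
    intros [K|[[Kg K]|[Kg K]]]; [left | right; left | right; right];
      try split; try tauto; apply HP; simpl; auto using guard_wff; intros; apply HX; tauto.
Qed.

Lemma sp_rhs_mono (M1 M2 : model UF UB) e nu u :
  pre _ _ M1 = pre _ _ M2 -> wfe e ->
  (forall e' nu', wfe e' -> spI _ _ M2 e' nu' u -> spI _ _ M1 e' nu' u) ->
  sp_rhs M2 D e nu u -> sp_rhs M1 D e nu u.
Proof.
  intros Hp Hw Hs. apply (sp_rhs_transfer M1 M2 (fun _ => True)); auto.
  - intros g nu' Hg _. apply sat_guard_pre_indep; auto.
  - intros s t nu' Hg _. apply eval_gterm_pre_indep; auto.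
Qed.

Lemma sp_rhs_agree (M1 M2 : model UF UB) e nu nu' u :
  pre _ _ M1 = pre _ _ M2 -> wfe e -> agree (fun x => frees x e) nu nu' ->
  (forall e' n1 n2, wfe e' -> agree (fun x => frees x e') n1 n2 ->
     spI _ _ M1 e' n1 u -> spI _ _ M2 e' n2 u) ->
  sp_rhs M1 D e nu u -> sp_rhs M2 D e nu' u.
Proof.
  intros Hp Hwf Hag HP.
  pose proof (fun g n1 n2 => sat_guard_indep M1 M2 g n1 n2 Hp) as HG.
  pose proof (fun s t n1 n2 => eval_gterm_indep M1 M2 s t n1 n2 Hp) as HT.
  pose proof wft_gterm_emb as Hargs.
  destruct e as [phi | s t]; [destruct phi | destruct t]; simpl in *; unfold spT, spF in *;
    unfold agree in *; simpl in *;
    try solve [ tauto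
              | intros K; (eapply HP; [| |exact K]); simpl; auto
              | destruct Hwf; intros [K|K]; [left|right]; (eapply HP; [| |exact K]);
                  simpl; intros; auto
              | intros [i K]; exists i; (eapply HP; [| |exact K]); simpl; intros; eauto ].
  - replace (fun i => eval M1 nu (args i)) with (fun i => eval M2 nu' (args i))
      by (apply functional_extensionality_dep; intros i; symmetry; apply HT;
          [auto | intros x Hx; apply Hag; eauto]).
    intros [K|[i K]]; [left|right; exists i]; (eapply HP; [| |exact K]); simpl.
    + apply HD.
    + apply agree_irho. intros i. rewrite !param_upd_pvar. reflexivity.
    + auto.
    + intros x Hx; apply Hag; eauto.
  - destruct Hwf as (Hg & Ha & Hb).
    assert (E : sat M1 nu phi1 <-> sat M2 nu' phi1) by (apply HG; auto).
    intros [K|[[Kg K]|[Kg K]]]; [left | right; left | right; right];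
      try split; try tauto; (eapply HP; [| |exact K]); simpl; auto using guard_wff.
  - destruct Hwf as [Hg Ha].
    assert (A : forall v, agree (fun x => freef x phi1) (upd nu y v) (upd nu' y v) /\
                          agree (fun x => freef x phi2) (upd nu y v) (upd nu' y v))
      by (intros v; split; apply agree_upd; intros x [Hx Hxy]; auto).
    intros [[v K]|[v [Kg K]]]; [left | right]; exists v; try split;
      try (eapply HP; [| |exact K]); simpl; auto using guard_wff; try apply A.
    apply (HG _ _ _ Hg (proj1 (A v))); auto.
  - intros [[Hm [i K]]|[i K]]; [left; split; auto | right]; exists i.
    + erewrite <- HT; eauto.
    + (eapply HP; [| |exact K]); simpl; intros; eauto.
  - destruct Hwf as (Hg & Ha & Hb).
    assert (E : sat M1 nu g <-> sat M2 nu' g) by (apply HG; auto).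
    intros [K|[[Kg K]|[Kg K]]]; [left | right; left | right; right];
      try split; try tauto; (eapply HP; [| |exact K]); simpl; auto using guard_wff.
Qed.

(** * Frame models as least fixpoints *)

Definition sp_point : Type := (@sexpr S * assignment UF UB * UF)%type.

Definition sp_op (M : model UF UB) (P : sp_point -> Prop) (x : sp_point) : Prop :=
  let '(e, nu, u) := x in
  wfe e /\ sp_rhs (with_sp M (fun e nu u => P (e, nu, u))) D e nu u.

Lemma sp_op_mono (M : model UF UB) (P Q : sp_point -> Prop) :
  (forall x, P x -> Q x) -> forall x, sp_op M P x -> sp_op M Q x.
Proof.
  intros H [[e nu] u] [Hw Hr]. split; auto.
  revert Hr. apply sp_rhs_mono; simpl; auto.
Qed.

Lemma frame_sp_least Th (M : model UF UB) P :
  frame_model D Th M ->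
  (forall e nu u, wfe e -> sp_rhs (with_sp M P) D e nu u -> P e nu u) ->
  forall e nu u, wfe e -> spI _ _ M e nu u -> P e nu u.
Proof.
  intros (_ & Hse & _ & Hmin & _) HP.
  set (L := lfp _ (sp_op M)).
  assert (L_sub : forall e nu u, wfe e -> L (e, nu, u) -> spI _ _ M e nu u).
  { intros e nu u Hw Hl. apply (Hl (fun '(e, nu, u) => wfe e -> spI _ _ M e nu u)); auto.
    intros [[e' nu'] u'] [Hw' Hr] _. apply Hse; auto.
    revert Hr. apply sp_rhs_mono; simpl; auto. }
  assert (L_eqs : support_eqs (with_sp M (fun e nu u => L (e, nu, u))) D).
  { intros e nu Hw u; simpl. split.
    - intros Hl. exact (proj2 (lfp_unfold _ _ (sp_op_mono M) _ Hl)).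
    - intros Hr. apply (lfp_prefixpoint _ _ (sp_op_mono M)). split; auto. }
  assert (sub_L : forall e nu u, wfe e -> spI _ _ M e nu u -> L (e, nu, u)).
  { intros e nu u Hw Hs. apply NNPP; intros Hn.
    apply (Hmin (with_sp M (fun e nu u => L (e, nu, u))) eq_refl L_sub);
      [exists e, nu, u; auto | exact L_eqs]. }
  intros e nu u Hw Hs.
  apply (sub_L e nu u Hw Hs (fun '(e, nu, u) => wfe e -> P e nu u)); auto.
  intros [[e' nu'] u'] [Hw' Hr] _. apply HP; auto.
  revert Hr. apply sp_rhs_mono; simpl; auto.
Qed.

Lemma frame_sp_local Th (M : model UF UB) : frame_model D Th M -> sp_local M.
Proof.
  intros HM. assert (Hse : support_eqs M D) by apply HM.
  intros e nu nu' u Hw Hag Hs. revert nu' Hag.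
  apply (frame_sp_least Th M (fun e nu u => forall nu', agree (fun x => frees x e) nu nu' ->
                                             spI _ _ M e nu' u)); auto.
  intros e' n u' Hw' Hr n' Hag'. apply Hse; auto.
  revert Hr. apply sp_rhs_agree; simpl; auto.
Qed.

Definition polar (p : bool) (A B : Prop) : Prop := if p then A -> B else B -> A.

Lemma polar_iff p (A B : Prop) : (A <-> B) -> polar p A B.
Proof. destruct p; simpl; tauto. Qed.

Lemma sat_iI_mono (M : model UF UB) (I J : irel_interp) :
  (forall r vals, I r vals -> J r vals) ->
  forall phi : @formula S, wff phi -> forall p nu, ipos p phi ->
    polar p (sat (with_iI M I) nu phi) (sat (with_iI M J) nu phi).
Proof.
  intros HIJ.
  assert (ET : forall s (t : @term S s) nu,
                 wft t -> eval (with_iI M I) nu t = eval (with_iI M J) nu t)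
    by (intros; apply eval_iI_indep; auto).
  assert (EG : forall g nu, guard g -> (sat (with_iI M I) nu g <-> sat (with_iI M J) nu g))
    by (intros; apply sat_guard_pre_indep; auto).
  induction phi using formula_mind with (P := fun _ _ => True); simpl; intros; auto;
    unfold polar in *.
  - destruct H. rewrite !ET by assumption. destruct p; auto.
  - replace (fun i => eval (with_iI M I) nu (args i)) with (fun i => eval (with_iI M J) nu (args i))
      by (apply functional_extensionality_dep; intros; symmetry; auto).
    destruct p; auto.
  - replace (fun i => eval (with_iI M I) nu (args i)) with (fun i => eval (with_iI M J) nu (args i))
      by (apply functional_extensionality_dep; intros; symmetry; auto).
    subst p. auto.
  - destruct H. rewrite !ET by assumption. destruct p; auto.
  - destruct H, H0. specialize (IHphi1 H p nu H0). specialize (IHphi2 H1 p nu H2).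
    destruct p; tauto.
  - specialize (IHphi H (negb p) nu H0). destruct p; simpl in *; tauto.
  - destruct H as (Hg & Ha & Hb), H0 as [Hpa Hpb].
    specialize (IHphi2 Ha p nu Hpa). specialize (IHphi3 Hb p nu Hpb).
    specialize (EG _ nu Hg). destruct p; tauto.
  - destruct H as [Hg Ha].
    destruct p; intros [v Hv]; exists v; specialize (EG _ (upd nu y v) Hg);
      specialize (IHphi2 Ha _ (upd nu y v) H0); simpl in IHphi2; tauto.
Qed.

Definition ind_point : Type := {r : irel S & forall i, U UF UB (emb (iarg S r i))}.

Definition ind_op (M : model UF UB) (I : ind_point -> Prop) (x : ind_point) : Prop :=
  let (r, vals) := x in
  exists nu : assignment UF UB, (fun i => nu (pvar D r i)) = vals /\
    sat (with_iI M (fun r vals => I (existT _ r vals))) nu (irho D r).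

Lemma ind_op_mono (M : model UF UB) (I J : ind_point -> Prop) :
  (forall x, I x -> J x) -> forall x, ind_op M I x -> ind_op M J x.
Proof.
  intros HIJ [r vals] [nu [Enu Hs]]. exists nu. split; auto.
  destruct (HD r) as (_ & Hw & Hpos & _).
  apply (sat_iI_mono M _ _ (fun r vals => HIJ (existT _ r vals)) _ Hw true nu Hpos Hs).
Qed.

Lemma frame_iI_least Th (M : model UF UB) I :
  frame_model D Th M ->
  (forall r nu, sat (with_iI M I) nu (irho D r) -> I r (fun i => nu (pvar D r i))) ->
  forall r vals, iI _ _ M r vals -> I r vals.
Proof.
  intros HM HI. pose proof (frame_sp_local Th M HM) as Hloc.
  destruct HM as (_ & _ & Hie & _ & Hmin).
  set (L := lfp _ (ind_op M)).
  set (ML := with_iI M (fun r vals => L (existT _ r vals))).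
  assert (L_sub : forall r vals, L (existT _ r vals) -> iI _ _ M r vals).
  { intros r vals Hl. apply (Hl (fun x => iI _ _ M (projT1 x) (projT2 x))).
    intros [r' vals'] [nu [<- Hs]].
    change (sat (with_iI M (iI _ _ M)) nu (irho D r')) in Hs.
    rewrite with_iI_id in Hs. apply Hie, Hs. }
  assert (L_eqs : ind_eqs ML D).
  { intros r nu. split.
    - intros Hl. destruct (lfp_unfold _ _ (ind_op_mono M) _ Hl) as [nu' [Enu Hs]].
      apply (proj2 (eval_sat_agree ML Hloc) _ (proj1 (proj2 (HD r))) nu' nu); auto.
      apply agree_irho. intros i. exact (f_equal (fun vals => vals i) Enu).
    - intros Hs. apply (lfp_prefixpoint _ _ (ind_op_mono M)). exists nu. auto. }
  assert (sub_L : forall r vals, iI _ _ M r vals -> L (existT _ r vals)).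
  { intros r vals Hi. apply NNPP; intros Hn.
    apply (Hmin ML eq_refl eq_refl L_sub); [exists r, vals; auto | exact L_eqs]. }
  intros r vals Hi. apply (sub_L r vals Hi (fun x => I (projT1 x) (projT2 x))).
  intros [r' vals'] [nu [<- Hs]]. apply HI, Hs.
Qed.

(** * Transfer along a stable mutation *)

Definition def_within (M : model UF UB) (X : UF -> Prop) r
    (vals : forall i, U UF UB (emb (iarg S r i))) : Prop :=
  forall nu, (forall i, nu (pvar D r i) = vals i) -> sp_within M (SEF (irho D r)) nu X.

Lemma def_within_of Th (M : model UF UB) X r args nu :
  frame_model D Th M -> wff (FIRel r args) -> sp_within M (SEF (FIRel r args)) nu X ->
  def_within M X r (fun i => eval M nu (args i)).
Proof.
  intros HM Hw HX nu' Hnu w Hs. apply HX, (proj1 (proj2 HM)); [exact Hw |].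
  left. apply (frame_sp_local Th M HM (SEF (irho D r)) nu'); [apply HD | | exact Hs].
  apply agree_irho. intros i. rewrite param_upd_pvar, Hnu. reflexivity.
Qed.

Lemma mutation_sym (M M' : model UF UB) : mutation M M' -> mutation M' M.
Proof. intros (Hc & Hr & Hf). repeat split; intros; symmetry; auto. Qed.

Lemma stable_on_sym (M M' : model UF UB) X : stable_on M M' X -> stable_on M' M X.
Proof. intros H f Hf args Ha. symmetry; auto. Qed.

Lemma fg_in_of_fg_eq X o (v : U UF UB (emb o)) :
  o = None -> (forall u, fg_eq o v u -> X u) -> fg_in X o v.
Proof. intros ->. simpl. auto. Qed.

Lemma guard_transfer (M M' : model UF UB) X :
  support_eqs M D -> mutation M M' -> stable_on M M' X ->
  (forall s (t : @term S s), gterm t -> forall nu, sp_within M (SET s t) nu X ->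
     eval M nu t = eval M' nu t) /\
  (forall phi : @formula S, guard phi -> forall nu, sp_within M (SEF phi) nu X ->
     (sat M nu phi <-> sat M' nu phi)).
Proof.
  intros Hse (Hc & Hr & Hf) Hstab.
  apply term_formula_mind; simpl; intros; try tauto.
  all: try match goal with HX : sp_within ?M0 ?e ?nu ?X0 |- _ =>
         assert (Hx : forall w, sp_rhs M0 D e nu w -> X0 w)
           by (apply sp_within_rhs; simpl; intuition auto using gterm_wft, guard_wff);
         simpl in Hx; unfold spT, spF in Hx
       end;
    unfold sp_within in *.
  - apply Hc.
  - replace (fun i => eval M' nu (args i)) with (fun i => eval M nu (args i))
      by (apply functional_extensionality_dep; intros i; apply H; eauto).
    destruct (fmut S f) eqn:Em.
    + destruct (fmut_fg S f Em) as [i Hi].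
      apply Hstab; auto. exists i. apply fg_in_of_fg_eq; auto. intros; apply Hx; eauto.
    + rewrite (Hf f Em). reflexivity.
  - destruct H2 as (Hg & Ha & Hb).
    apply ite_eval_eq; [apply H | intros; apply H0 | intros; apply H1];
      auto; intros w Hw; apply Hx; tauto.
  - destruct H1. rewrite H, H0 by (auto; intros w Hw; apply Hx; tauto). reflexivity.
  - replace (fun i => eval M' nu (args i)) with (fun i => eval M nu (args i))
      by (apply functional_extensionality_dep; intros i; apply H; eauto).
    rewrite Hr. reflexivity.
  - destruct H1. rewrite H, H0 by (auto; intros w Hw; apply Hx; tauto). reflexivity.
  - rewrite H by auto. reflexivity.
  - destruct H2 as (Hg & Ha & Hb).
    assert (E : sat M nu g <-> sat M' nu g) by (apply H; auto; intros w Hw; apply Hx; tauto).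
    destruct (classic (sat M nu g));
      [rewrite (H0 Ha nu) | rewrite (H1 Hb nu)]; try tauto; intros w Hw; apply Hx; tauto.
  - destruct H1 as [Hg Ha].
    assert (E : forall v, sat M (upd nu y v) g <-> sat M' (upd nu y v) g)
      by (intros v; apply H; auto; intros w Hw; apply Hx; eauto).
    split; intros [v Hv]; exists v; specialize (E v);
      rewrite (H0 Ha (upd nu y v)) in *; try tauto;
      intros w Hw; apply Hx; right; exists v; tauto.
Qed.

Lemma sp_transfer_sub Th (M M' : model UF UB) X :
  support_eqs M D -> frame_model D Th M' -> mutation M M' -> stable_on M M' X ->
  forall e nu u, wfe e -> sp_within M e nu X -> spI _ _ M' e nu u -> spI _ _ M e nu u.
Proof.
  intros Hse HM' Hmut Hstab. assert (Hse' : support_eqs M' D) by apply HM'.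
  destruct (guard_transfer M M' X Hse Hmut Hstab) as [GT GF].
  intros e nu u Hw HX Hs. revert HX.
  apply (frame_sp_least Th M'
           (fun e nu u => spI _ _ M' e nu u /\ (sp_within M e nu X -> spI _ _ M e nu u)))
    with (nu := nu); auto.
  clear e nu u Hw Hs. intros e nu u Hw Hr. split.
  - apply Hse'; auto. revert Hr. apply sp_rhs_mono; simpl; auto. intros ? ? _ []; auto.
  - intros HX. apply Hse; auto. revert Hr.
    apply (sp_rhs_transfer M (with_sp M' _) X).
    + exact Hw.
    + intros g nu' Hg Hg'. rewrite (GF g Hg nu' Hg'). apply sat_guard_pre_indep; auto.
    + intros s t nu' Ht Ht'. rewrite (GT s t Ht nu' Ht'). apply eval_gterm_pre_indep; auto.
    + simpl. intros e' nu' _ He' [_ K]. auto.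
    + apply sp_within_rhs; auto.
Qed.

Section Transfer.
Variables (Th : forall (UF : Type) (UB : bsort S -> Type), premodel UF UB -> Prop)
  (M M' : model UF UB) (X : UF -> Prop).
Hypotheses (HM : frame_model D Th M) (HM' : frame_model D Th M')
  (Hmut : mutation M M') (Hstab : stable_on M M' X).

Lemma sp_transfer e nu :
  wfe e -> sp_within M e nu X -> spI _ _ M e nu = spI _ _ M' e nu.
Proof.
  intros Hw HX.
  assert (Hsub : forall u, spI _ _ M' e nu u -> spI _ _ M e nu u)
    by (intros; apply (sp_transfer_sub Th M M' X); auto; apply HM).
  apply functional_extensionality; intros u. apply propositional_extensionality. split; auto.
  apply (sp_transfer_sub Th M' M X); auto using mutation_sym, stable_on_sym.
  - apply HM'.
  - intros w Hw'. apply HX, Hsub, Hw'.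
Qed.

Lemma eval_transfer s (t : @term S s) nu :
  wft t -> sp_within M (SET s t) nu X -> eval M nu t = eval M' nu t.
Proof.
  assert (Hse : support_eqs M D) by apply HM.
  destruct (guard_transfer M M' X Hse Hmut Hstab) as [GT GF].
  revert nu. induction t using term_mind with (P0 := fun _ => True);
    try exact I; intros nu Hw HX;
    pose proof (sp_within_rhs M (SET _ _) nu X Hse Hw HX) as Hx;
    simpl in Hw, Hx; unfold spT, spF in Hx; auto.
  - apply GT; auto. intros i. apply wft_gterm_emb; auto.
  - destruct Hw as (Hg & Ha & Hb).
    apply ite_eval_eq; [apply GF | intros; apply IHt2 | intros; apply IHt3];
      auto; intros w Hw; apply Hx; tauto.
  - apply sp_transfer; auto.
  - apply sp_transfer; auto.
  - destruct Hw. simpl. rewrite IHt1, IHt2 by (auto; intros w Hw; apply Hx; tauto). reflexivity.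
  - destruct Hw. simpl. rewrite IHt1, IHt2 by (auto; intros w Hw; apply Hx; tauto). reflexivity.
  - simpl. rewrite IHt by auto. reflexivity.
Qed.

Lemma eval_with_iI_transfer (J : irel_interp) s (t : @term S s) nu :
  wft t -> sp_within M (SET s t) nu X -> eval (with_iI M J) nu t = eval M' nu t.
Proof. intros Hw HX. rewrite <- eval_transfer by auto. apply eval_iI_indep; auto. Qed.

Lemma sat_irel_transfer (J : irel_interp) r args p nu :
  (forall r vals, J r vals -> def_within M X r vals -> iI _ _ M' r vals) ->
  ipos p (FIRel r args) \/
    (forall r vals, def_within M X r vals -> iI _ _ M' r vals -> J r vals) ->
  wff (FIRel r args) -> sp_within M (SEF (FIRel r args)) nu X ->
  polar p (sat (with_iI M J) nu (FIRel r args)) (sat M' nu (FIRel r args)).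
Proof.
  intros HJ Hpol Hw HX. simpl in *.
  pose proof (def_within_of Th M X r args nu HM Hw HX) as Hdef.
  pose proof (sp_within_rhs M (SEF (FIRel r args)) nu X (proj1 (proj2 HM)) Hw HX) as Hx.
  simpl in Hx.
  replace (fun i => eval (with_iI M J) nu (args i)) with (fun i => eval M nu (args i))
    by (apply functional_extensionality_dep; intros i; symmetry; apply eval_iI_indep; auto).
  replace (fun i => eval M' nu (args i)) with (fun i => eval M nu (args i))
    by (apply functional_extensionality_dep; intros i;
        apply eval_transfer; [auto | intros w h; apply Hx; right; eauto]).
  destruct Hpol as [-> | Hrev]; [|destruct p]; simpl; auto.
Qed.

(* Positivity is needed only when J is transferred to M' in one direction. *)
Lemma sat_transfer (J : irel_interp) :
  (forall r vals, J r vals -> def_within M X r vals -> iI _ _ M' r vals) ->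
  forall phi : @formula S, wff phi -> forall p nu,
    ipos p phi \/ (forall r vals, def_within M X r vals -> iI _ _ M' r vals -> J r vals) ->
    sp_within M (SEF phi) nu X ->
    polar p (sat (with_iI M J) nu phi) (sat M' nu phi).
Proof.
  intros HJ.
  assert (Hse : support_eqs M D) by apply HM.
  destruct (guard_transfer M M' X Hse Hmut Hstab) as [_ GF].
  assert (EG : forall g nu, guard g -> (sat (with_iI M J) nu g <-> sat M nu g))
    by (intros; apply sat_guard_pre_indep; auto).
  induction phi using formula_mind with (P := fun _ _ => True); try exact I;
    intros Hw p nu Hpol HX;
    try (apply sat_irel_transfer; assumption);
    pose proof (sp_within_rhs M (SEF _) nu X Hse Hw HX) as Hx;
    simpl in Hw, Hx, Hpol; unfold spT, spF in Hx; simpl.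
  - destruct Hw. apply polar_iff.
    rewrite !eval_with_iI_transfer by (auto; intros w Hw; apply Hx; tauto). reflexivity.
  - apply polar_iff. destruct Hmut as (_ & Hr & _). rewrite Hr.
    replace (fun i => eval (with_iI M J) nu (args i)) with (fun i => eval M' nu (args i))
      by (apply functional_extensionality_dep; intros i; symmetry;
          apply eval_with_iI_transfer; [auto | intros w h; apply Hx; eauto]).
    reflexivity.
  - destruct Hw. apply polar_iff.
    rewrite !eval_with_iI_transfer by (auto; intros w Hw; apply Hx; tauto). reflexivity.
  - destruct Hw as [Ha Hb].
    pose proof (IHphi1 Ha p nu ltac:(tauto) (fun w h => Hx w (or_introl h))).
    pose proof (IHphi2 Hb p nu ltac:(tauto) (fun w h => Hx w (or_intror h))).
    destruct p; simpl in *; tauto.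
  - pose proof (IHphi Hw (negb p) nu Hpol Hx).
    destruct p; simpl in *; tauto.
  - destruct Hw as (Hg & Ha & Hb).
    pose proof (GF _ Hg nu (fun w h => Hx w (or_introl h))). pose proof (EG _ nu Hg).
    destruct (classic (sat M nu phi1)) as [Hgt | Hgf].
    + pose proof (IHphi2 Ha p nu ltac:(tauto)
                    (fun w h => Hx w (or_intror (or_introl (conj Hgt h))))).
      destruct p; simpl in *; tauto.
    + pose proof (IHphi3 Hb p nu ltac:(tauto)
                    (fun w h => Hx w (or_intror (or_intror (conj Hgf h))))).
      destruct p; simpl in *; tauto.
  - destruct Hw as [Hg Ha].
    assert (E : forall v, sat (with_iI M J) (upd nu y v) phi1 <-> sat M' (upd nu y v) phi1).
    { intros v. rewrite EG by auto. apply GF; auto. intros w h; apply Hx; left; eauto. }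
    assert (A : forall v, sat M (upd nu y v) phi1 ->
                  polar p (sat (with_iI M J) (upd nu y v) phi2) (sat M' (upd nu y v) phi2)).
    { intros v Hv. apply IHphi2; auto. intros w h; apply Hx; right; eauto. }
    destruct p; simpl in A; intros [v Hv]; exists v; specialize (E v); specialize (A v);
      pose proof (EG _ (upd nu y v) Hg); tauto.
Qed.

Lemma iI_transfer_sub r vals :
  def_within M X r vals -> iI _ _ M r vals -> iI _ _ M' r vals.
Proof.
  assert (Hie : ind_eqs M D) by apply HM. assert (Hie' : ind_eqs M' D) by apply HM'.
  set (J := fun r vals => iI _ _ M r vals /\ (def_within M X r vals -> iI _ _ M' r vals)).
  intros Hdef Hi. refine (proj2 (frame_iI_least Th M J HM _ r vals Hi) Hdef).
  clear r vals Hdef Hi. intros r nu Hs.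
  destruct (HD r) as (_ & Hw & Hpos & _). split.
  - apply Hie. rewrite <- (with_iI_id M).
    exact (sat_iI_mono M J _ (fun r vals H => proj1 H) _ Hw true nu Hpos Hs).
  - intros Hdef. apply Hie'.
    apply (sat_transfer J (fun r vals H => proj2 H) _ Hw true nu (or_introl Hpos)); auto.
Qed.

End Transfer.

Lemma iI_transfer Th (M M' : model UF UB) X r vals :
  frame_model D Th M -> frame_model D Th M' -> mutation M M' -> stable_on M M' X ->
  def_within M X r vals -> (iI _ _ M r vals <-> iI _ _ M' r vals).
Proof.
  intros HM HM' Hmut Hstab Hdef. split.
  - apply (iI_transfer_sub Th M M' X); auto.
  - apply (iI_transfer_sub Th M' M X); auto using mutation_sym, stable_on_sym.
    intros nu Hnu. unfold sp_within. rewrite <- (sp_transfer Th M M' X); auto.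
    + exact (Hdef nu Hnu).
    + exact (proj1 (proj2 (HD r))).
Qed.

Lemma sat_transfer_iff Th (M M' : model UF UB) X (phi : @formula S) nu :
  frame_model D Th M -> frame_model D Th M' -> mutation M M' -> stable_on M M' X ->
  wff phi -> sp_within M (SEF phi) nu X -> (sat M nu phi <-> sat M' nu phi).
Proof.
  intros HM HM' Hmut Hstab Hw HX.
  pose proof (iI_transfer Th M M' X) as Hiff.
  pose proof (sat_transfer Th M M' X HM HM' Hmut Hstab (iI _ _ M)
                (fun r vals Hi Hd => proj1 (Hiff r vals HM HM' Hmut Hstab Hd) Hi) phi Hw)
    as Htr.
  rewrite with_iI_id in Htr.
  assert (Hrev : forall r vals, def_within M X r vals -> iI _ _ M' r vals -> iI _ _ M r vals)
    by (intros r vals Hd; apply Hiff; auto).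
  split; [apply (Htr true) | apply (Htr false)]; auto.
Qed.

End FrameLogic.

Theorem theorem1 (S : signature) (D : @idefs S)
  (Th : forall (UF : Type) (UB : bsort S -> Type), @premodel S UF UB -> Prop)
  (UF : Type) (UB : bsort S -> Type) (M M' : @model S UF UB)
  (X : UF -> Prop) (nu : @assignment S UF UB) :
  idefs_wf D ->
  frame_model D Th M -> frame_model D Th M' ->
  mutation M M' -> stable_on M M' X ->
  (forall alpha : @formula S, wff alpha ->
     (forall u, spI _ _ M (SEF alpha) nu u -> X u) ->
     (sat M nu alpha <-> sat M' nu alpha)) /\
  (forall (s : @srt S) (t : @term S s), wft t ->
     (forall u, spI _ _ M (SET s t) nu u -> X u) ->
     eval M nu t = eval M' nu t).
Proof.
  intros HD HM HM' Hmut Hstab. split.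
  - intros alpha Hw HX.
    exact (sat_transfer_iff D HD Th M M' X alpha nu HM HM' Hmut Hstab Hw HX).
  - intros s t Hw HX. exact (eval_transfer D HD Th M M' X HM HM' Hmut Hstab s t nu Hw HX).
Qed.
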